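(* Let $\alpha,\gamma\in\mathbb{C}$ and $\Delta\in\mathbb{C}^*$. Consider extensions of conformal $\mathrm{SV}$-modules $$0\to V(\alpha,\Delta)\to E\to\mathbb{C}c_\gamma\to0,$$ realized as $E=\mathbb{C}[\partial]v_\Delta\oplus\mathbb{C}c_\gamma$ (as vector spaces), with $\mathbb{C}[\partial]v_\Delta\cong V(\alpha,\Delta)$ a submodule and $$L_\lambda c_\gamma=f(\partial,\lambda)v_\Delta,\ M_\lambda c_\gamma=g(\partial,\lambda)v_\Delta,\ Y_\lambda c_\gamma=h(\partial,\lambda)v_\Delta,\ \partial c_\gamma=\gamma c_\gamma+a(\partial)v_\Delta,$$ where $f,g,h\in\mathbb{C}[\partial,\lambda]$, $a\in\mathbb{C}[\partial]$. There are nontrivial extensions of this form if and only if $\alpha+\gamma=0$ and $\Delta=1$. In this case $\dim_{\mathbb{C}}\mathrm{Ext}(\mathbb{C}c_{-\alpha},V(\alpha,1))=1$, and the only (up to a scalar) nontrivial extension is given by $g=h=0$ and $f(\partial,\lambda)=a(\partial)=a_0$ with $a_0\in\mathbb{C}^*$.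
   Context: A Lie conformal algebra is a $\mathbb{C}[\partial]$-module $R$ with a $\mathbb{C}$-bilinear $\lambda$-bracket satisfying conformal sesquilinearity, skew-symmetry $[a_\lambda b]=-[b_{-\lambda-\partial}a]$ and the Jacobi identity. A conformal module over $R$ is a $\mathbb{C}[\partial]$-module $V$ with a linear map $a\mapsto a_\lambda\in\mathrm{End}_{\mathbb{C}}(V)\otimes\mathbb{C}[\lambda]$ such that $[a_\lambda,b_\mu]=[a_\lambda b]_{\lambda+\mu}$ and $(\partial a)_\lambda=[\partial,a_\lambda]=-\lambda a_\lambda$. The Schrödinger–Virasoro conformal algebra $\mathrm{SV}$ is the free $\mathbb{C}[\partial]$-module with basis $L,M,Y$ whose nonzero $\lambda$-brackets (up to skew-symmetry) are $[L_\lambda L]=(\partial+2\lambda)L$, $[L_\lambda Y]=(\partial+\tfrac32\lambda)Y$, $[L_\lambda M]=(\partial+\lambda)M$, $[Y_\lambda Y]=(\partial+2\lambda)M$. $V(\alpha,\Delta)=\mathbb{C}[\partial]v_\Delta$ has $L_\lambda v_\Delta=(\partial+\alpha+\Delta\lambda)v_\Delta$, $M_\lambda v_\Delta=Y_\lambda v_\Delta=0$. $\mathbb{C}c_\gamma$ is the one-dimensional module with $\partial c_\gamma=\gamma c_\gamma$ and zero $\lambda$-actions. An extension of $W$ by $V$ is an exact sequence $0\to V\to E\to W\to0$ of conformal modules; equivalence is via a module map of middle terms compatible with identities on $V,W$; trivial means equivalent to the direct sum. $\mathrm{Ext}(W,V)$ is the space of extension cocycles modulo coboundaries. *)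

From HB Require Import structures.
From mathcomp Require Import all_boot all_order all_algebra.
From mathcomp Require Import reals complex.
Set Implicit Arguments. Unset Strict Implicit. Unset Printing Implicit Defensive.
Import Order.TTheory GRing.Theory Num.Theory.
Local Open Scope ring_scope.

Section SV.
Variable C : fieldType.

(* Generators L, M, Y of the free C[d]-module SV. *)
Inductive gen := gL | gM | gY.

(* lambda-brackets [x_lam y] = c(d, lam) z, returned as (z, c) where the
   coefficient polynomial c(d,lam) is given as a function of (d, lam)
   (all coefficients are polynomials of degree <= 1).  The four given
   brackets, the reversed ones obtained by skew-symmetry
   [b_lam a] = - [a_{-lam-d} b], and zero otherwise. *)
Definition sv_bracket (x y : gen) : gen * (C -> C -> C) :=
  match x, y with
  | gL, gL => (gL, fun d l => d + 2%:R * l)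
  | gL, gY => (gY, fun d l => d + 3%:R / 2%:R * l)
  | gL, gM => (gM, fun d l => d + l)
  | gY, gY => (gM, fun d l => d + 2%:R * l)
  | gY, gL => (gY, fun d l => - (d + 3%:R / 2%:R * (- l - d)))
  | gM, gL => (gM, fun d l => - (d + (- l - d)))
  | _, _ => (gM, fun _ _ => 0)
  end.

(* Extension data (f, g, h, a):  L_lam c = f(d,lam) v, M_lam c = g(d,lam) v,
   Y_lam c = h(d,lam) v, d c = gamma c + a(d) v.
   Bivariate polynomials are {poly {poly C}}: outer variable lam,
   coefficients polynomials in d. *)
Record extdata := ExtData {
  ef : {poly {poly C}}; eg : {poly {poly C}}; eh : {poly {poly C}};
  ea : {poly C} }.

Definition ext_zero : extdata := ExtData 0 0 0 0.

Definition ext_subscale (d1 : extdata) (k : C) (d2 : extdata) : extdata :=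
  ExtData (ef d1 - k%:P%:P * ef d2) (eg d1 - k%:P%:P * eg d2)
          (eh d1 - k%:P%:P * eh d2) (ea d1 - k%:P * ea d2).

Definition ext_coef (d : extdata) (x : gen) : {poly {poly C}} :=
  match x with gL => ef d | gM => eg d | gY => eh d end.

(* Elements of E = C[d] v (+) C c, written (p, k) for p(d) v + k c. *)
Definition Elt := ({poly C} * C)%type.

Definition Eadd (u w : Elt) : Elt := (u.1 + w.1, u.2 + w.2).
Definition Escale (k : C) (u : Elt) : Elt := (k *: u.1, k * u.2).

(* The module V(alpha,Delta) = C[d] v: d acts by multiplication by 'X and
   x_lam (p(d) v) = p(d+lam) x_lam v (conformal sesquilinearity), with
   L_lam v = (d + alpha + Delta lam) v, M_lam v = Y_lam v = 0.
   Lambda-actions are recorded through their values at lam in C. *)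
Definition Vact (alpha Delta : C) (x : gen) (l : C) (p : {poly C}) : {poly C} :=
  match x with
  | gL => (p \Po ('X + l%:P)) * ('X + (alpha + Delta * l)%:P)
  | _ => 0
  end.

Definition Ed (gamma : C) (d : extdata) (u : Elt) : Elt :=
  ('X * u.1 + u.2 *: ea d, u.2 * gamma).

Definition Eact (alpha Delta : C) (d : extdata) (x : gen) (l : C) (u : Elt) : Elt :=
  (Vact alpha Delta x l u.1 + u.2 *: (ext_coef d x).[l%:P], 0).

(* E is a conformal SV-module:
   [d, x_lam] = - lam x_lam  and  [x_lam, y_mu] = [x_lam y]_{lam+mu},
   where (d^k z)_nu = (-nu)^k z_nu. *)
Definition is_ext (alpha Delta gamma : C) (d : extdata) : Prop :=
  (forall x l u,
      Eadd (Ed gamma d (Eact alpha Delta d x l u))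
           (Escale (-1) (Eact alpha Delta d x l (Ed gamma d u)))
      = Escale (- l) (Eact alpha Delta d x l u))
  /\ (forall x y l m u,
      Eadd (Eact alpha Delta d x l (Eact alpha Delta d y m u))
           (Escale (-1) (Eact alpha Delta d y m (Eact alpha Delta d x l u)))
      = Escale ((sv_bracket x y).2 (- (l + m)) l)
               (Eact alpha Delta d (sv_bracket x y).1 (l + m) u)).

Definition ext_equiv (alpha Delta gamma : C) (d1 d2 : extdata) : Prop :=
  exists phi : Elt -> Elt,
    (forall u w, phi (Eadd u w) = Eadd (phi u) (phi w))
    /\ (forall k u, phi (Escale k u) = Escale k (phi u))
    /\ (forall u, phi (Ed gamma d1 u) = Ed gamma d2 (phi u))
    /\ (forall x l u, phi (Eact alpha Delta d1 x l u) = Eact alpha Delta d2 x l (phi u))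
    /\ (forall p, phi (p, 0) = (p, 0))
    /\ (forall u, (phi u).2 = u.2).

(* Trivial = equivalent to the direct sum V(alpha,Delta) (+) C c_gamma,
   which is the extension with zero data. *)
Definition ext_trivial (alpha Delta gamma : C) (d : extdata) : Prop :=
  ext_equiv alpha Delta gamma d ext_zero.

(* Ext = cocycles (data giving extensions) modulo coboundaries (data giving
   trivial extensions).  dim Ext = 1: some cocycle z0 is not a coboundary
   and every cocycle is a scalar multiple of z0 modulo coboundaries. *)
Definition ext_dim1 (alpha Delta gamma : C) : Prop :=
  exists z0, is_ext alpha Delta gamma z0 /\ ~ ext_trivial alpha Delta gamma z0
    /\ forall z, is_ext alpha Delta gamma z ->
         exists k : C, is_ext alpha Delta gamma (ext_subscale z k z0)
                  /\ ext_trivial alpha Delta gamma (ext_subscale z k z0).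

Definition ext_const (a0 : C) : extdata := ExtData a0%:P%:P 0 0 a0%:P.

End SV.

From HB Require Import structures.
From mathcomp Require Import all_boot all_order all_algebra.
From mathcomp Require Import reals complex.
From mathcomp Require Import ring.
Set Implicit Arguments. Unset Strict Implicit. Unset Printing Implicit Defensive.
Import GRing.Theory Num.Theory.
Local Open Scope ring_scope.

(* Evaluating the relation [d, x_lam] = - lam x_lam at c_gamma gives
   (d + lam - gamma) x_lam c = x_lam (a(d) v), i.e. every coefficient f, g, h
   is determined by a.  A change of splitting c |-> c + q(d) v replaces a by
   a + (d - gamma) q, so the class of an extension only depends on a(gamma),
   and it is trivial iff a(gamma) = 0.  For x = L, evaluating at
   d = gamma - lam gives a(gamma) (gamma + alpha + (Delta - 1) lam) = 0, so
   a nontrivial class forces alpha + gamma = 0 and Delta = 1; conversely in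
   that case f(d, lam) = a(d + lam), g = h = 0 is a cocycle for every a. *)

Section Extensions.
Variables (C : fieldType) (alpha Delta gamma : C).
Implicit Types (d : extdata C) (p q : {poly C}) (l : C).

Lemma XaddC_neq0 (c : C) : 'X + c%:P != 0 :> {poly C}.
Proof. exact/monic_neq0/monicXaddC. Qed.

Lemma VactD x l p q :
  Vact alpha Delta x l (p + q) = Vact alpha Delta x l p + Vact alpha Delta x l q.
Proof. by case: x => /=; rewrite ?addr0 // comp_polyD mulrDl. Qed.

Lemma VactZ x l (k : C) p : Vact alpha Delta x l (k *: p) = k *: Vact alpha Delta x l p.
Proof. by case: x => /=; rewrite ?scaler0 // comp_polyZ scalerAl. Qed.

Lemma Vact0 x l : Vact alpha Delta x l 0 = 0.
Proof. by case: x => /=; rewrite ?comp_poly0 ?mul0r. Qed.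

Lemma Vact_mulXsubC x l p :
  Vact alpha Delta x l (p * ('X - gamma%:P))
  = ('X + (l - gamma)%:P) * Vact alpha Delta x l p.
Proof.
case: x => /=; rewrite ?mulr0 //.
by rewrite comp_polyM comp_polyB comp_polyX comp_polyC; ring.
Qed.

Lemma is_ext_coefE d : is_ext alpha Delta gamma d -> forall x l,
  ('X + (l - gamma)%:P) * (ext_coef d x).[l%:P] = Vact alpha Delta x l (ea d).
Proof.
case=> commd _ x l; have /(congr1 fst) /= := commd x l (0, 1).
rewrite Vact0 add0r mulr0 add0r !scale1r scale0r addr0 -!mul_polyC.
set F := (ext_coef d x).[l%:P]; set V := Vact _ _ _ _ _ => E.
apply/eqP; rewrite -subr_eq0; apply/eqP.
by transitivity ('X * F + (-1)%:P * (V + (1 * gamma)%:P * F) - (- l)%:P * F);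
  [ring | rewrite E subrr].
Qed.

Lemma ext_equiv_shift d1 d2 q :
  ea d1 + gamma *: q = 'X * q + ea d2 ->
  (forall x l, (ext_coef d1 x).[l%:P]
               = Vact alpha Delta x l q + (ext_coef d2 x).[l%:P]) ->
  ext_equiv alpha Delta gamma d1 d2.
Proof.
move=> Ha Hcoef; exists (fun u => (u.1 + u.2 *: q, u.2)); split.
  by move=> [p1 k1] [p2 k2]; rewrite /Eadd /= scalerDl addrACA.
split; first by move=> k [p1 k1]; rewrite /Escale /= scalerDr scalerA.
split.
  move=> [p k]; rewrite /Ed /=; congr pair.
  by rewrite -scalerA -addrA -scalerDr Ha scalerDr scalerAr mulrDr addrA.
split; last by split=> [p|u] //=; rewrite scale0r addr0.
move=> x l [p k]; rewrite /Eact /= scale0r addr0 Hcoef VactD VactZ.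
by rewrite scalerDr addrA.
Qed.

Lemma ext_trivial_root d : ext_trivial alpha Delta gamma d -> (ea d).[gamma] = 0.
Proof.
case=> phi [phiD [phiZ [phi_d [_ [phiV phi2]]]]].
set q := (phi (0, 1)).1.
have phi_c : phi (0, 1) = (q, 1) by rewrite [phi _]surjective_pairing phi2.
have /(congr1 fst) := phi_d (0, 1).
have -> : Ed gamma d (0, 1) = Eadd (ea d, 0) (Escale gamma (0, 1)).
  by rewrite /Ed /Eadd /Escale /= !(mulr0, add0r, addr0, scale1r, scaler0, mul1r, mulr1).
rewrite phiD phiZ phiV phi_c /Ed /Eadd /Escale /= scaler0 addr0.
move/(congr1 (horner^~ gamma)); rewrite hornerD hornerZ hornerM hornerX.
by rewrite -[RHS]add0r => /addIr.
Qed.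

Lemma ext_trivial_of_root d : is_ext alpha Delta gamma d ->
  (ea d).[gamma] = 0 -> ext_trivial alpha Delta gamma d.
Proof.
move=> He /eqP /factor_theorem [q Ha]; apply: (ext_equiv_shift (q := q)).
  by rewrite Ha /= addr0 -mul_polyC; ring.
move=> x l; have := is_ext_coefE He x l.
rewrite Ha Vact_mulXsubC => /(mulfI (XaddC_neq0 _)) ->.
by case: x; rewrite /= horner0 addr0.
Qed.

Lemma ext_trivialE d : is_ext alpha Delta gamma d ->
  ext_trivial alpha Delta gamma d <-> (ea d).[gamma] = 0.
Proof. by move=> He; split; [apply: ext_trivial_root | apply: ext_trivial_of_root]. Qed.

Lemma is_ext_root_factor d l : is_ext alpha Delta gamma d ->
  (ea d).[gamma] * (gamma + alpha + (Delta - 1) * l) = 0.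
Proof.
move=> He; have /(congr1 (horner^~ (gamma - l))) := is_ext_coefE He gL l.
rewrite /= !(hornerM, hornerD, hornerX, hornerC, horner_comp) subrK.
rewrite (_ : gamma - l + (l - gamma) = 0) ?mul0r; last by ring.
by move/esym <-; congr (_ * _); ring.
Qed.

Lemma ext_nontrivial_cond d : is_ext alpha Delta gamma d ->
  ~ ext_trivial alpha Delta gamma d -> alpha + gamma = 0 /\ Delta = 1.
Proof.
move=> He /(ext_trivialE He) /eqP a_gamma.
have factor0 l : gamma + alpha + (Delta - 1) * l = 0.
  by apply: (mulfI a_gamma); rewrite mulr0 (is_ext_root_factor _ He).
have ag0 : alpha + gamma = 0 by have := factor0 0; rewrite mulr0 addr0 addrC.
split=> //; have := factor0 1.
by rewrite [gamma + _]addrC ag0 mulr1 add0r => /eqP; rewrite subr_eq0 => /eqP.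
Qed.

End Extensions.

Section Resonant.
Variables (C : fieldType) (alpha : C).
Implicit Types (d : extdata C) (l : C).

Lemma comp_XaddC (p : {poly C}) (a b : C) :
  (p \Po ('X + a%:P)) \Po ('X + b%:P) = p \Po ('X + (b + a)%:P).
Proof. by rewrite -comp_polyA comp_polyD comp_polyX comp_polyC polyCD addrA. Qed.

Lemma is_ext_resonantP d : is_ext alpha 1 (- alpha) d <->
  [/\ forall l, (ef d).[l%:P] = ea d \Po ('X + l%:P),
      forall l, (eg d).[l%:P] = 0 & forall l, (eh d).[l%:P] = 0].
Proof.
split.
  move=> He.
  have coefE x l :
      ('X + (l + alpha)%:P) * (ext_coef d x).[l%:P] = Vact alpha 1 x l (ea d).
    by have := is_ext_coefE He x l; rewrite opprK.
  have coef0 x l : x <> gL -> (ext_coef d x).[l%:P] = 0.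
    move=> xL; apply: (mulfI (XaddC_neq0 (l + alpha))).
    by rewrite mulr0 coefE; case: x xL.
  split=> l; [|by apply: (coef0 gM) | by apply: (coef0 gY)].
  apply: (mulIf (XaddC_neq0 (l + alpha))).
  by rewrite mulrC (coefE gL) /= mul1r [alpha + l]addrC.
case=> fE gE hE; split.
  move=> x l [p k]; rewrite /Eadd /Escale /Ed /Eact /=; congr pair; last by ring.
  case: x => /=; rewrite ?fE ?gE ?hE ?comp_polyD ?comp_polyM ?comp_polyX ?comp_polyZ;
    rewrite -!mul_polyC; ring.
move=> x y l m [p k]; rewrite /Eadd /Escale /Eact /=; congr pair; last by ring.
case: x; case: y => /=; rewrite ?fE ?gE ?hE /= ?Vact0.
all: rewrite ?(comp_polyD, comp_polyM, comp_polyZ, comp_XaddC, comp_polyX, comp_polyC,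
              comp_poly0).
all: rewrite ?[m + l]addrC -!mul_polyC; ring.
Qed.

Lemma is_ext_const a0 : is_ext alpha 1 (- alpha) (ext_const a0).
Proof. by apply/is_ext_resonantP; split=> l /=; rewrite ?horner0 // hornerC comp_polyC. Qed.

Lemma ext_const_nontrivial a0 :
  a0 != 0 -> ~ ext_trivial alpha 1 (- alpha) (ext_const a0).
Proof. by move=> a0_neq0 /ext_trivial_root; rewrite /= hornerC; apply/eqP. Qed.

Lemma ext_dim1_resonant : ext_dim1 alpha 1 (- alpha).
Proof.
exists (ext_const 1); split; first exact: is_ext_const.
split; first exact/ext_const_nontrivial/oner_neq0.
move=> z /is_ext_resonantP [fE gE hE]; exists (ea z).[- alpha].
have He : is_ext alpha 1 (- alpha) (ext_subscale z (ea z).[- alpha] (ext_const 1)).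
  apply/is_ext_resonantP; split=> l /=;
    rewrite !(hornerD, hornerN, hornerM, hornerC, horner0) ?mulr0 ?subr0 //.
  by rewrite fE mulr1 comp_polyB comp_polyC.
split=> //; apply/(ext_trivialE He).
by rewrite /= hornerD hornerN hornerM !hornerC mulr1 subrr.
Qed.

Lemma ext_equiv_const d : is_ext alpha 1 (- alpha) d ->
  ~ ext_trivial alpha 1 (- alpha) d ->
  exists a0 : C, a0 != 0 /\ ext_equiv alpha 1 (- alpha) d (ext_const a0).
Proof.
move=> He Hn; set a0 := (ea d).[- alpha].
have a0_neq0 : a0 != 0 by apply/eqP => a_root; apply/Hn/(ext_trivialE He).
have /factor_theorem [q] : root (ea d - a0%:P) (- alpha).
  by rewrite rootE hornerD hornerN hornerC subrr.
move/eqP; rewrite subr_eq => /eqP aE; exists a0; split=> //; clearbody a0.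
case/is_ext_resonantP: He => fE gE hE.
apply: (ext_equiv_shift (q := q)).
  by rewrite /= aE -mul_polyC; ring.
case=> l /=; rewrite ?gE ?hE ?horner0 ?addr0 //.
rewrite fE hornerC aE comp_polyD comp_polyM comp_polyB comp_polyX !comp_polyC.
by rewrite polyCN opprK mul1r polyCD [alpha%:P + _]addrC addrA.
Qed.

End Resonant.

Theorem theorem3p4 (R : realType) (alpha gamma Delta : R[i]) (hDelta : Delta != 0) :
  ((exists d : extdata R[i],
       is_ext alpha Delta gamma d /\ ~ ext_trivial alpha Delta gamma d)
   <-> (alpha + gamma = 0 /\ Delta = 1))
  /\ (alpha + gamma = 0 -> Delta = 1 ->
      ext_dim1 alpha 1 (- alpha)
      /\ (forall a0 : R[i], a0 != 0 ->
            is_ext alpha 1 (- alpha) (ext_const a0)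
            /\ ~ ext_trivial alpha 1 (- alpha) (ext_const a0))
      /\ (forall d : extdata R[i],
            is_ext alpha 1 (- alpha) d -> ~ ext_trivial alpha 1 (- alpha) d ->
            exists a0 : R[i], a0 != 0 /\ ext_equiv alpha 1 (- alpha) d (ext_const a0))).
Proof.
split.
  split=> [[d [He Hn]]|[ag0 ->]]; first exact: ext_nontrivial_cond He Hn.
  have -> : gamma = - alpha by apply/eqP; rewrite -addr_eq0 addrC ag0.
  exists (ext_const 1); split; first exact: is_ext_const.
  exact/ext_const_nontrivial/oner_neq0.
move=> _ _; split; first exact: ext_dim1_resonant.
split; last exact: ext_equiv_const.
by move=> a0 a0_neq0; split; [exact: is_ext_const | exact: ext_const_nontrivial].
Qed.
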